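(* Let $(\mathscr{A},{}^{\vee},\varpi)$ be an abelian category with duality in which $2$ is invertible, and let $\mathscr{B}\subseteq\mathscr{A}$ be a full subcategory closed under subobjects, quotient objects and finite products in $\mathscr{A}$ and closed under duality. Then (1) the natural functor $\mathbb{Q}\mathscr{B}\to\mathbb{Q}\mathscr{A}$ is a full subcategory, and (2) the natural functor $\mathbb{Q}^h(\mathscr{B},{}^{\vee},\varpi)\to\mathbb{Q}^h(\mathscr{A},{}^{\vee},\varpi)$ is a full subcategory.
   Context: An abelian category with duality: abelian $\mathscr{A}$, exact contravariant functor ${}^{\vee}:\mathscr{A}^{op}\to\mathscr{A}$, natural isomorphism $\varpi:1\to{}^{\vee\vee}$; $2$ invertible means multiplication by $2$ is surjective on Hom groups. $\mathscr{B}$ inherits the duality. $\mathbb{Q}\mathscr{E}$ is Quillen's Q-category (morphisms $P_1\to P_2$ are isomorphism classes of diagrams $P_1\overset{p}{\twoheadleftarrow}E\overset{\iota}{\hookrightarrow}P_2$). $\mathbb{Q}^h(\mathscr{E},{}^{\vee},\varpi)$ is the hermitian Q-category: objects are hermitian spaces $(P,\varphi)$ ($\varphi:P\xrightarrow{\sim}P^{\vee}$ symmetric w.r.t. $\varpi$), morphisms $(P_1,\varphi_1)\to(P_2,\varphi_2)$ are morphisms $P_1\overset{p}{\twoheadleftarrow}E\overset{\iota}{\hookrightarrow}P_2$ of $\mathbb{Q}\mathscr{E}$ with $p^{\vee}\varphi_1p=\iota^{\vee}\varphi_2\iota$. *)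

From HB Require Import structures.
From mathcomp Require Import all_boot all_algebra.
Set Implicit Arguments. Unset Strict Implicit. Unset Printing Implicit Defensive.
Import GRing.Theory.
Local Open Scope ring_scope.

Record PCat := {
  Ob : Type;
  Hm : Ob -> Ob -> zmodType;
  idm : forall a, Hm a a;
  cmp : forall a b c, Hm b c -> Hm a b -> Hm a c;
  cmp1l : forall a b (f : Hm a b), cmp (idm b) f = f;
  cmp1r : forall a b (f : Hm a b), cmp f (idm a) = f;
  cmpA : forall a b c d (h : Hm c d) (g : Hm b c) (f : Hm a b),
      cmp h (cmp g f) = cmp (cmp h g) f;
  cmpDl : forall a b c (g g' : Hm b c) (f : Hm a b),
      cmp (g + g') f = cmp g f + cmp g' f;
  cmpDr : forall a b c (g : Hm b c) (f f' : Hm a b),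
      cmp g (f + f') = cmp g f + cmp g f'
}.
Arguments Hm {p}.
Arguments idm {p}.
Arguments cmp {p a b c}.
Notation "g \oc f" := (cmp g f) (at level 40, left associativity).

Section Basic.
Variable C : PCat.

Definition mono (a b : Ob C) (f : Hm a b) :=
  forall (c : Ob C) (g h : Hm c a), f \oc g = f \oc h -> g = h.
Definition epi (a b : Ob C) (f : Hm a b) :=
  forall (c : Ob C) (g h : Hm b c), g \oc f = h \oc f -> g = h.
Definition iso (a b : Ob C) (f : Hm a b) :=
  exists g : Hm b a, g \oc f = idm a /\ f \oc g = idm b.

Definition isZero (z : Ob C) :=
  forall a : Ob C, (forall f : Hm a z, f = 0) /\ (forall g : Hm z a, g = 0).

Definition isProduct (p a b : Ob C) (pa : Hm p a) (pb : Hm p b) :=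
  forall (c : Ob C) (f : Hm c a) (g : Hm c b),
    exists h : Hm c p, (pa \oc h = f /\ pb \oc h = g) /\
      forall h' : Hm c p, pa \oc h' = f -> pb \oc h' = g -> h' = h.

Definition isKernel (a b K : Ob C) (f : Hm a b) (k : Hm K a) :=
  f \oc k = 0 /\
  forall (c : Ob C) (g : Hm c a), f \oc g = 0 ->
    exists u : Hm c K, k \oc u = g /\ forall u', k \oc u' = g -> u' = u.

Definition isCokernel (a b Q : Ob C) (f : Hm a b) (q : Hm b Q) :=
  q \oc f = 0 /\
  forall (c : Ob C) (g : Hm b c), g \oc f = 0 ->
    exists u : Hm Q c, u \oc q = g /\ forall u', u' \oc q = g -> u' = u.

Definition abelian :=
  (exists z, isZero z) /\
  (forall a b : Ob C, exists p (pa : Hm p a) (pb : Hm p b), isProduct pa pb) /\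
  (forall (a b : Ob C) (f : Hm a b), exists K (k : Hm K a), isKernel f k) /\
  (forall (a b : Ob C) (f : Hm a b), exists Q (q : Hm b Q), isCokernel f q) /\
  (forall (a b : Ob C) (m : Hm a b), mono m -> exists c (f : Hm b c), isKernel f m) /\
  (forall (a b : Ob C) (e : Hm a b), epi e -> exists c (f : Hm c a), isCokernel f e).

Definition two_invertible :=
  forall (a b : Ob C) (f : Hm a b), exists g : Hm a b, g *+ 2 = f.

Definition ses (a b c : Ob C) (f : Hm a b) (g : Hm b c) :=
  mono f /\ isKernel g f /\ isCokernel f g.

Record DualData := {
  D0 : Ob C -> Ob C;
  D1 : forall a b, Hm a b -> Hm (D0 b) (D0 a);
  dw : forall a, Hm a (D0 (D0 a))
}.

Definition isDuality (d : DualData) :=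
  (forall a : Ob C, D1 d (idm a) = idm (D0 d a)) /\
  (forall (a b c : Ob C) (g : Hm b c) (f : Hm a b), D1 d (g \oc f) = D1 d f \oc D1 d g) /\
  (forall (a b : Ob C) (f g : Hm a b), D1 d (f + g) = D1 d f + D1 d g) /\
  (forall (a b c : Ob C) (f : Hm a b) (g : Hm b c), ses f g -> ses (D1 d g) (D1 d f)) /\
  (forall a : Ob C, iso (dw d a)) /\
  (forall (a b : Ob C) (f : Hm a b), D1 d (D1 d f) \oc dw d a = dw d b \oc f).

(* Q-category: a morphism a -> b is a class of diagrams a <<-p- E -i->> b,
   p epi, i mono, up to isomorphism of E compatible with p and i. *)
Definition isQmor (a b E : Ob C) (p : Hm E a) (i : Hm E b) := epi p /\ mono i.
Definition qiso (a b E : Ob C) (p : Hm E a) (i : Hm E b)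
                (E' : Ob C) (p' : Hm E' a) (i' : Hm E' b) :=
  exists h : Hm E E', iso h /\ p' \oc h = p /\ i' \oc h = i.

Definition herm (d : DualData) (P : Ob C) (phi : Hm P (D0 d P)) :=
  iso phi /\ D1 d phi \oc dw d P = phi.
Definition hcond (d : DualData) (P1 P2 E : Ob C)
    (phi1 : Hm P1 (D0 d P1)) (phi2 : Hm P2 (D0 d P2))
    (p : Hm E P1) (i : Hm E P2) :=
  D1 d p \oc (phi1 \oc p) = D1 d i \oc (phi2 \oc i).

End Basic.

Arguments D0 {C}. Arguments D1 {C} d {a b}. Arguments dw {C}.

Section FullSub.
Variables (C : PCat) (P : Ob C -> Prop).
Definition FullSub : PCat :=
  {| Ob := {a : Ob C | P a};
     Hm := fun x y => Hm (proj1_sig x) (proj1_sig y);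
     idm := fun x => idm (proj1_sig x);
     cmp := fun x y z g f => g \oc f;
     cmp1l := fun x y f => cmp1l f;
     cmp1r := fun x y f => cmp1r f;
     cmpA := fun x y z t h g f => cmpA h g f;
     cmpDl := fun x y z g g' f => cmpDl g g' f;
     cmpDr := fun x y z g f f' => cmpDr g f f' |}.

Definition restrict_dual (d : DualData C) (hD : forall a, P a -> P (D0 d a))
  : DualData FullSub :=
  {| D0 := fun x : Ob FullSub => (exist P (D0 d (proj1_sig x)) (hD _ (proj2_sig x)) : Ob FullSub);
     D1 := fun (x y : Ob FullSub) (f : Hm x y) => D1 d f;
     dw := fun x : Ob FullSub => dw d (proj1_sig x) |}.
End FullSub.
Arguments restrict_dual {C P} d hD.

From HB Require Import structures.
From mathcomp Require Import all_boot all_algebra.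

(* The only point with content is that a morphism of B which is mono (epi) in
   B stays mono (epi) in A: its kernel (cokernel) in A lies in B, because B is
   closed under subobjects (quotients), and there it must vanish.  Fullness is
   then immediate: for a Q-morphism  a <<- E >-> b  of A between objects of B,
   E is a subobject of b, hence in B, and isomorphisms of diagrams and the
   hermitian condition read the same in B and in A. *)

Set Implicit Arguments.
Unset Strict Implicit.
Unset Printing Implicit Defensive.
Import GRing.Theory.
Local Open Scope ring_scope.

Section Preadditive.
Variable C : PCat.

Lemma cmp0l (a b c : Ob C) (f : Hm a b) : (0 : Hm b c) \oc f = 0.
Proof. by apply: (@addrI _ (0 \oc f)); rewrite -cmpDl !addr0. Qed.

Lemma cmp0r (a b c : Ob C) (g : Hm b c) : g \oc (0 : Hm a b) = 0.
Proof. by apply: (@addrI _ (g \oc 0)); rewrite -cmpDr !addr0. Qed.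

Lemma cmpBl (a b c : Ob C) (g h : Hm b c) (f : Hm a b) :
  (g - h) \oc f = g \oc f - h \oc f.
Proof. by apply: (@addIr _ (h \oc f)); rewrite -cmpDl !subrK. Qed.

Lemma cmpBr (a b c : Ob C) (g : Hm b c) (f f' : Hm a b) :
  g \oc (f - f') = g \oc f - g \oc f'.
Proof. by apply: (@addIr _ (g \oc f')); rewrite -cmpDr !subrK. Qed.

Lemma kernel_mono (a b K : Ob C) (f : Hm a b) (k : Hm K a) :
  isKernel f k -> mono k.
Proof.
move=> [fk0 univ] c g h kgh.
have [|u [_ uniq_u]] := univ c (k \oc g); first by rewrite cmpA fk0 cmp0l.
by rewrite (uniq_u g erefl) (uniq_u h (esym kgh)).
Qed.

Lemma cokernel_epi (a b Q : Ob C) (f : Hm a b) (q : Hm b Q) :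
  isCokernel f q -> epi q.
Proof.
move=> [qf0 univ] c g h gqh.
have [|u [_ uniq_u]] := univ c (g \oc q); first by rewrite -cmpA qf0 cmp0r.
by rewrite (uniq_u g erefl) (uniq_u h (esym gqh)).
Qed.

Lemma mono_of_kernel_eq0 (a b K : Ob C) (f : Hm a b) (k : Hm K a) :
  isKernel f k -> k = 0 -> mono f.
Proof.
move=> [_ univ] k0 c g h fgh.
have [|u [ku _]] := univ c (g - h); first by rewrite cmpBr fgh subrr.
by apply/eqP; rewrite -subr_eq0 -ku k0 cmp0l.
Qed.

Lemma epi_of_cokernel_eq0 (a b Q : Ob C) (f : Hm a b) (q : Hm b Q) :
  isCokernel f q -> q = 0 -> epi f.
Proof.
move=> [_ univ] q0 c g h gfh.
have [|u [uq _]] := univ c (g - h); first by rewrite cmpBl gfh subrr.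
by apply/eqP; rewrite -subr_eq0 -uq q0 cmp0r.
Qed.

End Preadditive.

Section FullSubcategory.
Variables (C : PCat) (P : Ob C -> Prop).
Hypothesis has_ker :
  forall (a b : Ob C) (f : Hm a b), exists K (k : Hm K a), isKernel f k.
Hypothesis has_coker :
  forall (a b : Ob C) (f : Hm a b), exists Q (q : Hm b Q), isCokernel f q.
Hypothesis Psub : forall (a b : Ob C) (m : Hm a b), mono m -> P b -> P a.
Hypothesis Pquot : forall (a b : Ob C) (e : Hm a b), epi e -> P a -> P b.
Local Notation B := (FullSub P).

Lemma FullSub_mono (E b : Ob B) (i : Hm E b) :
  mono i -> @mono C (sval E) (sval b) i.
Proof.
move=> monoB; have [K [k kerk]] := has_ker i.
have PK : P K := Psub (kernel_mono kerk) (svalP E).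
apply: (mono_of_kernel_eq0 kerk).
apply: (monoB (exist P K PK)).
by rewrite cmp0r; case: kerk.
Qed.

Lemma FullSub_epi (E a : Ob B) (p : Hm E a) :
  epi p -> @epi C (sval E) (sval a) p.
Proof.
move=> epiB; have [Q [q cokq]] := has_coker p.
have PQ : P Q := Pquot (cokernel_epi cokq) (svalP a).
apply: (epi_of_cokernel_eq0 cokq).
apply: (epiB (exist P Q PQ)).
by rewrite cmp0l; case: cokq.
Qed.

Lemma FullSub_isQmor (a b E : Ob B) (p : Hm E a) (i : Hm E b) :
  isQmor p i -> @isQmor C (sval a) (sval b) (sval E) p i.
Proof. by move=> [/FullSub_epi epi_p /FullSub_mono mono_i]. Qed.

Lemma isQmor_FullSub (a b E : Ob B) (p : Hm E a) (i : Hm E b) :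
  @isQmor C (sval a) (sval b) (sval E) p i -> isQmor p i.
Proof. by move=> [epi_p mono_i]; split=> c g h; [apply: epi_p | apply: mono_i]. Qed.

End FullSubcategory.

Lemma qiso_refl (C : PCat) (a b E : Ob C) (p : Hm E a) (i : Hm E b) :
  qiso p i p i.
Proof.
exists (idm E); split; last by rewrite !cmp1r.
by exists (idm E); rewrite cmp1l.
Qed.

Theorem lemma3p5 (A : PCat) (dd : DualData A) (P : Ob A -> Prop)
  (hA : abelian A) (hD : isDuality dd) (h2 : two_invertible A)
  (Psub : forall (a b : Ob A) (m : Hm a b), mono m -> P b -> P a)
  (Pquot : forall (a b : Ob A) (e : Hm a b), epi e -> P a -> P b)
  (Pzero : forall z : Ob A, isZero z -> P z)
  (Pprod : forall (a b p : Ob A) (pa : Hm p a) (pb : Hm p b),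
      isProduct pa pb -> P a -> P b -> P p)
  (Pdual : forall a : Ob A, P a -> P (D0 dd a)) :
  let B := FullSub P in
  let ddB := restrict_dual dd Pdual in
  (* (1) Q B -> Q A is a well-defined functor which is a full subcategory *)
  ((forall (a b E : Ob B) (p : Hm E a) (i : Hm E b),
      isQmor p i -> @isQmor A (sval a) (sval b) (sval E) p i) /\
   (forall (a b E E' : Ob B) (p : Hm E a) (i : Hm E b) (p' : Hm E' a) (i' : Hm E' b),
      isQmor p i -> isQmor p' i' ->
      @qiso A (sval a) (sval b) (sval E) p i (sval E') p' i' -> qiso p i p' i') /\
   (forall (a b : Ob B) (E : Ob A) (p : Hm E (sval a)) (i : Hm E (sval b)),
      isQmor p i ->
      exists (E' : Ob B) (p' : Hm E' a) (i' : Hm E' b),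
        isQmor p' i' /\ @qiso A (sval a) (sval b) E p i (sval E') p' i'))
  /\
  (* (2) Q^h B -> Q^h A is a well-defined functor which is a full subcategory *)
  ((forall (x : Ob B) (phi : Hm x (D0 ddB x)), herm phi -> @herm A dd (sval x) phi) /\
   (forall (x1 x2 E : Ob B) (phi1 : Hm x1 (D0 ddB x1)) (phi2 : Hm x2 (D0 ddB x2))
           (p : Hm E x1) (i : Hm E x2),
      herm phi1 -> herm phi2 -> isQmor p i -> hcond phi1 phi2 p i ->
      @isQmor A (sval x1) (sval x2) (sval E) p i /\
      @hcond A dd (sval x1) (sval x2) (sval E) phi1 phi2 p i) /\
   (forall (x1 x2 E E' : Ob B) (phi1 : Hm x1 (D0 ddB x1)) (phi2 : Hm x2 (D0 ddB x2))
           (p : Hm E x1) (i : Hm E x2) (p' : Hm E' x1) (i' : Hm E' x2),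
      herm phi1 -> herm phi2 ->
      isQmor p i -> hcond phi1 phi2 p i ->
      isQmor p' i' -> hcond phi1 phi2 p' i' ->
      @qiso A (sval x1) (sval x2) (sval E) p i (sval E') p' i' -> qiso p i p' i') /\
   (forall (x1 x2 : Ob B) (phi1 : Hm x1 (D0 ddB x1)) (phi2 : Hm x2 (D0 ddB x2))
           (E : Ob A) (p : Hm E (sval x1)) (i : Hm E (sval x2)),
      herm phi1 -> herm phi2 ->
      isQmor p i -> @hcond A dd (sval x1) (sval x2) E phi1 phi2 p i ->
      exists (E' : Ob B) (p' : Hm E' x1) (i' : Hm E' x2),
        isQmor p' i' /\ hcond phi1 phi2 p' i' /\
        @qiso A (sval x1) (sval x2) E p i (sval E') p' i')).
Proof.
move=> B ddB.
have [_ [_ [has_ker [has_coker _]]]] := hA.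
have Qmor_ambient := FullSub_isQmor has_ker has_coker Psub Pquot.
split; [split; [|split] | split; [|split; [|split]]].
- exact: Qmor_ambient.
- by [].
- move=> a b E p i Qpi.
  pose E' : Ob B := exist P E (Psub _ _ _ (proj2 Qpi) (svalP b)).
  exists E', p, i; split; last exact: qiso_refl.
  exact: (isQmor_FullSub (E := E')).
- by [].
- by move=> x1 x2 E phi1 phi2 p i _ _ /Qmor_ambient.
- by [].
- move=> x1 x2 phi1 phi2 E p i _ _ Qpi hc.
  pose E' : Ob B := exist P E (Psub _ _ _ (proj2 Qpi) (svalP x2)).
  exists E', p, i; split; last by split; last exact: qiso_refl.
  exact: (isQmor_FullSub (E := E')).
Qed.
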